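(* Let $p\ge1$, $l\in\mathbb{Z}_{\ge0}$, and $s_1,\dots,s_p\in\mathbb{C}$ with $|s_i|<1$ or $s_i=1$ for every $1\le i\le p$. Then for every $\varepsilon>0$, $(\Delta^l\mathtt{s}^{\mathrm{sh}}_{(1,\dots,1;s_1,\dots,s_p)})(m)=O\bigl(m^{-(l+1-\varepsilon)}\bigr)$ as $m\to\infty$.
   Context: Convention $0^0=1$. $\mathtt{s}^{\mathrm{sh}}_{(1,\dots,1;s_1,\dots,s_p)}(m)=\sum_{m=m_1\ge\cdots\ge m_p\ge0}\frac{s_1^{m_1-m_2}\cdots s_{p-1}^{m_{p-1}-m_p}s_p^{m_p+1}}{(m_1+1)\cdots(m_p+1)}$; $(\Delta a)(m)=a(m)-a(m+1)$. *)

From HB Require Import structures.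
From mathcomp Require Import all_boot all_order all_algebra.
From mathcomp Require Import all_classical all_reals all_analysis.
From mathcomp Require Import complex.
Set Implicit Arguments. Unset Strict Implicit. Unset Printing Implicit Defensive.
Import Order.TTheory GRing.Theory Num.Theory.
Local Open Scope ring_scope.

Definition cmod (R : realType) (z : R[i]) : R := ComplexField.Normc.normc z.

(* value m_{k+1} (0-based index k) of an index vector f = (m_1,...,m_p);
   out-of-range indices give 0 (only used for the harmless check m_{p+1}=0 <= m_p). *)
Definition mval (p m : nat) (f : {ffun 'I_p -> 'I_m.+1}) (k : nat) : nat :=
  match (insub k : option 'I_p) with Some i => nat_of_ord (f i) | None => 0%N end.

Definition shexp (p m : nat) (f : {ffun 'I_p -> 'I_m.+1}) (k : nat) : nat :=
  if (k.+1 < p)%N then (mval f k - mval f k.+1)%N else (mval f k).+1.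

Definition shadm (p m : nat) (f : {ffun 'I_p -> 'I_m.+1}) : bool :=
  (mval f 0 == m) && [forall i : 'I_p, (mval f i.+1 <= mval f i)%N].

(* s^sh_{(1,...,1; s_1,...,s_p)}(m), with s_{k+1} = s k for k : 'I_p (0^0 = 1 via ^+) *)
Definition ssh (R : realType) (p : nat) (s : 'I_p -> R[i]) (m : nat) : R[i] :=
  \sum_(f : {ffun 'I_p -> 'I_m.+1} | shadm f)
    (\prod_(i < p) s i ^+ shexp f i) / (\prod_(i < p) ((mval f i).+1)%:R).

Definition delta (R : ringType) (a : nat -> R) : nat -> R := fun m => a m - a m.+1.

(* Summing first over m_2 = m - j gives, for p >= 2, the recursion
     s^sh_(s_1,...,s_p)(m) = (m+1)^-1 \sum_(j <= m) s_1^j s^sh_(s_2,...,s_p)(m-j).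
   Say that a sequence a has decay order al when, for every k,
   Delta^k a(m) = O(m^-(k+al) H_m^q) for some q, H_m being the harmonic number.
   This class is closed under sums, scalings and shifts; by the Leibniz rule for
   Delta, orders add under products; convolution with (s^j)_j, |s| < 1, keeps
   the order, since m + 1 <= (j + 1)(m - j + 1); partial sums turn order 1 into
   order 0 at the price of one more power of H_m; and 1/(m+1) has order 1.
   Hence, by induction on p, s^sh has decay order 1, and H_m^q = O(m^eps). *)

From HB Require Import structures.
From mathcomp Require Import all_boot all_order all_algebra.
From mathcomp Require Import all_classical all_reals all_analysis.
From mathcomp Require Import complex.
From mathcomp Require Import ring lra zify.
Import Order.TTheory GRing.Theory Num.Theory.
Local Open Scope ring_scope.

Set Implicit Arguments. Unset Strict Implicit.

Section ShuffleRecursion.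
Variable R : realType.
Local Notation C := (R[i]).

(* Index vectors with first entry n but entries bounded by a fixed M, so that
   the recursion can lower n without changing the index type; ssh is the case
   M = n = m. *)
Definition shadm_at (p M n : nat) (f : {ffun 'I_p -> 'I_M.+1}) : bool :=
  (mval f 0 == n) && [forall i : 'I_p, (mval f i.+1 <= mval f i)%N].

Definition shterm (p M : nat) (t : nat -> C) (f : {ffun 'I_p -> 'I_M.+1}) : C :=
  (\prod_(i < p) t i ^+ shexp f i) / (\prod_(i < p) ((mval f i).+1)%:R).

Definition ssh_at (p M : nat) (t : nat -> C) (n : nat) : C :=
  \sum_(f : {ffun 'I_p -> 'I_M.+1} | shadm_at n f) shterm t f.

Definition fcons (p M : nat) (x : 'I_M.+1) (g : {ffun 'I_p -> 'I_M.+1})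
  : {ffun 'I_p.+1 -> 'I_M.+1} :=
  [ffun i => if unlift ord0 i is Some j then g j else x].

Lemma mval_ord p M (f : {ffun 'I_p -> 'I_M.+1}) (i : 'I_p) : mval f i = f i.
Proof. by rewrite /mval valK. Qed.

Lemma mval_out p M (f : {ffun 'I_p -> 'I_M.+1}) k : (p <= k)%N -> mval f k = 0%N.
Proof. by move=> h; rewrite /mval insubF // ltnNge h. Qed.

Lemma mval_fcons0 p M x (g : {ffun 'I_p -> 'I_M.+1}) : mval (fcons x g) 0 = x.
Proof. by rewrite (mval_ord _ ord0) ffunE unlift_none. Qed.

Lemma mval_fconsS p M x (g : {ffun 'I_p -> 'I_M.+1}) k :
  mval (fcons x g) k.+1 = mval g k.
Proof.
case: (ltnP k p) => hk; last by rewrite !mval_out.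
rewrite (mval_ord _ (lift ord0 (Ordinal hk))) (mval_ord _ (Ordinal hk)).
by rewrite ffunE liftK.
Qed.

Lemma shexp_fconsS p M x (g : {ffun 'I_p -> 'I_M.+1}) k :
  shexp (fcons x g) k.+1 = shexp g k.
Proof. by rewrite /shexp !mval_fconsS ltnS. Qed.

Lemma big_fcons p M (F : {ffun 'I_p.+1 -> 'I_M.+1} -> C) :
  \sum_f F f = \sum_(x : 'I_M.+1) \sum_(g : {ffun 'I_p -> 'I_M.+1}) F (fcons x g).
Proof.
rewrite pair_big /=.
rewrite (reindex (fun u : 'I_M.+1 * {ffun 'I_p -> 'I_M.+1} => fcons u.1 u.2)) //.
exists (fun f : {ffun 'I_p.+1 -> 'I_M.+1} => (f ord0, [ffun j => f (lift ord0 j)]))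
  => [[x g] _|f _] /=.
  congr pair; first by rewrite ffunE unlift_none.
  by apply/ffunP => j; rewrite !ffunE liftK.
by apply/ffunP => i; rewrite ffunE; case: unliftP => [j ->|->]; rewrite ?ffunE.
Qed.

Lemma forall_mval_decr p M (f : {ffun 'I_p -> 'I_M.+1}) :
  [forall i : 'I_p, (mval f i.+1 <= mval f i)%N] =
  all (fun k => mval f k.+1 <= mval f k)%N (iota 0 p).
Proof.
apply/forallP/allP => [h k|h i].
  by rewrite mem_iota add0n => hk; exact: (h (Ordinal hk)).
by apply: h; rewrite mem_iota add0n ltn_ord.
Qed.

Lemma shadm_at_fcons p M n x (g : {ffun 'I_p -> 'I_M.+1}) :
  shadm_at n (fcons x g) = (x == n :> nat) && (mval g 0 <= x)%N &&
     [forall i : 'I_p, (mval g i.+1 <= mval g i)%N].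
Proof.
rewrite /shadm_at !forall_mval_decr /= mval_fcons0 mval_fconsS -andbA.
congr (_ && (_ && _)); rewrite (iotaDl 1 0 p) all_map.
by apply: eq_all => k /=; rewrite !mval_fconsS.
Qed.

Lemma shterm_fcons p M t (x : 'I_M.+1) (g : {ffun 'I_p.+1 -> 'I_M.+1}) :
  shterm t (fcons x g) =
  x.+1%:R^-1 * (t 0%N ^+ (x - mval g 0) * shterm (fun k => t k.+1) g).
Proof.
rewrite /shterm [\prod_(i < p.+2) _]big_ord_recl [\prod_(i < p.+2) _]big_ord_recl.
rewrite /= mval_fcons0 {1}/shexp /= mval_fcons0 (mval_fconsS x g 0).
have bump0 (i : nat) : bump 0 i = i.+1 by rewrite /bump leq0n add1n.
under eq_bigr => i _ do rewrite bump0 shexp_fconsS.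
under [in X in _ / X]eq_bigr => i _ do rewrite bump0 mval_fconsS.
by rewrite invfM; ring.
Qed.

Lemma ssh_at_fcons p M t n (hn : (n < M.+1)%N) :
  ssh_at p.+1 M t n =
  \sum_(g : {ffun 'I_p -> 'I_M.+1} |
          (mval g 0 <= n)%N && [forall i : 'I_p, (mval g i.+1 <= mval g i)%N])
    shterm t (fcons (Ordinal hn) g).
Proof.
rewrite /ssh_at big_mkcond big_fcons (bigD1 (Ordinal hn)) //= [X in _ + X]big1.
  by rewrite addr0 [RHS]big_mkcond; apply: eq_bigr => g _; rewrite shadm_at_fcons eqxx.
move=> x hx; apply: big1 => g _; rewrite shadm_at_fcons.
by case: eqP => //= hxn; case/eqP: hx; exact: val_inj.
Qed.

Definition conv (z : C) (b : nat -> C) (n : nat) : C :=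
  \sum_(j < n.+1) z ^+ j * b (n - j)%N.

Fixpoint ssh_rec (p : nat) (t : nat -> C) (n : nat) : C :=
  match p with
  | 0 => 0
  | p'.+1 => match p' with
             | 0 => t 0%N ^+ n.+1 / n.+1%:R
             | _ => n.+1%:R^-1 * conv (t 0%N) (ssh_rec p' (fun k => t k.+1)) n
             end
  end.

Lemma ssh_recSS p t : ssh_rec p.+2 t =
  (fun n => n.+1%:R^-1 * conv (t 0%N) (ssh_rec p.+1 (fun k => t k.+1)) n).
Proof. by []. Qed.

Lemma ssh_at1 M t n : (n <= M)%N -> ssh_at 1 M t n = t 0%N ^+ n.+1 / n.+1%:R.
Proof.
move=> hn; rewrite (ssh_at_fcons _ _ (hn : n < M.+1)%N) big_mkcond /=.
rewrite (eq_bigr (fun _ => t 0%N ^+ n.+1 / n.+1%:R)) => [|g _].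
  by rewrite sumr_const card_ffun !card_ord expn0 mulr1n.
rewrite mval_out // leq0n [X in if X then _ else _](_ : _ = true); last first.
  by apply/forallP => -[].
by rewrite /shterm !big_ord1 /shexp /= mval_fcons0.
Qed.

Lemma ssh_atS p M t n : (n <= M)%N ->
  ssh_at p.+2 M t n = n.+1%:R^-1 * conv (t 0%N) (ssh_at p.+1 M (fun k => t k.+1)) n.
Proof.
move=> hn; rewrite (ssh_at_fcons _ _ (hn : n < M.+1)%N) /conv mulr_sumr.
under [RHS]eq_bigr => j _ do rewrite /ssh_at big_mkcond mulr_sumr mulr_sumr.
rewrite [RHS]exchange_big big_mkcond; apply: eq_bigr => g _ /=.
rewrite shterm_fcons /=; set D := [forall _, _].
have [Dg|nD] := boolP D; last first.
  rewrite andbF; apply/esym/big1 => j _; rewrite /shadm_at -/D (negbTE nD) andbF.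
  by rewrite !mulr0.
rewrite andbT; case: (leqP (mval g 0) n) => hg; last first.
  apply/esym/big1 => j _; rewrite /shadm_at -/D Dg andbT.
  case: eqP => [h|]; last by rewrite !mulr0.
  by move: hg; rewrite h ltnNge leq_subr.
have hj : (n - mval g 0 < n.+1)%N by rewrite ltnS leq_subr.
rewrite (bigD1 (Ordinal hj)) //= big1 ?addr0.
  by rewrite /shadm_at -/D Dg andbT subKn // eqxx.
move=> j hj'; rewrite /shadm_at -/D Dg andbT.
case: eqP => [h|]; last by rewrite !mulr0.
by case/eqP: hj'; apply: val_inj => /=; rewrite h subKn // -ltnS.
Qed.

Lemma ssh_at_rec p M t n : (n <= M)%N -> ssh_at p.+1 M t n = ssh_rec p.+1 t n.
Proof.
elim: p t n => [|p IH] t n hn; first exact: ssh_at1.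
rewrite ssh_atS // ssh_recSS /conv; congr (_ * _); apply: eq_bigr => j _.
by rewrite IH // (leq_trans (leq_subr _ _) hn).
Qed.

Definition pad0 (p : nat) (s : 'I_p -> C) (k : nat) : C :=
  if insub k is Some i then s i else 0.

Lemma ssh_pad0 p (s : 'I_p.+1 -> C) m : ssh s m = ssh_rec p.+1 (pad0 s) m.
Proof.
rewrite -(ssh_at_rec _ _ (leqnn m)) /ssh_at /ssh; apply: eq_bigr => f _.
by rewrite /shterm; congr (_ / _); apply: eq_bigr => i _; rewrite /pad0 valK.
Qed.

End ShuffleRecursion.

Section GeometricBounds.
Variable R : realType.

Lemma geom_binomial_sumS (r : R) N n :
  (1 - r) * \sum_(j < n) r ^+ j * 'C(j + N.+1, N.+1)%:R + r ^+ n * 'C(n + N, N.+1)%:R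
  = \sum_(j < n) r ^+ j * 'C(j + N, N)%:R.
Proof.
elim: n => [|n IH]; first by rewrite !big_ord0 mulr0 add0r add0n bin_small // mulr0.
by rewrite !big_ord_recr /= -IH addSn addnS binS natrD exprS; ring.
Qed.

Lemma geom_binomial_sum_le1 (r : R) N n : 0 <= r -> r < 1 ->
  (1 - r) ^+ N.+1 * \sum_(j < n) r ^+ j * 'C(j + N, N)%:R <= 1.
Proof.
move=> r0 r1; elim: N => [|N IH].
  rewrite expr1; under eq_bigr => j _ do rewrite addn0 bin0 mulr1.
  by rewrite -opprB mulNr -subrX1 opprB gerBl exprn_ge0.
apply: le_trans IH; rewrite exprSr -mulrA.
apply: ler_wpM2l; first by rewrite exprn_ge0 // subr_ge0 ltW.
by rewrite -(geom_binomial_sumS r N n) lerDl mulr_ge0 ?exprn_ge0.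
Qed.

Lemma expn_le_fact_binomial j N : (j.+1 ^ N <= N`! * 'C(j + N, N))%N.
Proof.
rewrite mulnC bin_ffact; elim: N => [|N IH] //.
by rewrite expnS addnS ffactnS /= leq_mul // ltnS leq_addr.
Qed.

Lemma geom_poly_sum_bounded (r : R) N : 0 <= r -> r < 1 ->
  exists2 K, 0 <= K & forall n, \sum_(j < n) r ^+ j * j.+1%:R ^+ N <= K.
Proof.
move=> r0 r1; have r1' : 0 < 1 - r by rewrite subr_gt0.
exists (N`!%:R / (1 - r) ^+ N.+1); first by rewrite divr_ge0 ?exprn_ge0 ?ltW.
move=> n; rewrite ler_pdivlMr ?exprn_gt0 //.
pose S := \sum_(j < n) r ^+ j * 'C(j + N, N)%:R.
apply: (@le_trans _ _ (N`!%:R * S * (1 - r) ^+ N.+1)).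
  apply: ler_wpM2r; first by rewrite exprn_ge0 // ltW.
  rewrite mulr_sumr; apply: ler_sum => j _; rewrite mulrCA.
  apply: ler_wpM2l; first exact: exprn_ge0.
  by rewrite -natrX -natrM ler_nat expn_le_fact_binomial.
rewrite -mulrA [X in _ * X <= _]mulrC ler_piMr //.
exact: geom_binomial_sum_le1.
Qed.

Lemma geom_poly_bounded (r : R) N : 0 <= r -> r < 1 ->
  exists2 K, 0 <= K & forall m, r ^+ m * m.+1%:R ^+ N <= K.
Proof.
move=> r0 r1; have [K K0 hK] := geom_poly_sum_bounded N r0 r1; exists K => // m.
apply: le_trans (hK m.+1); rewrite big_ord_recr /= lerDr.
by apply: sumr_ge0 => j _; rewrite mulr_ge0 ?exprn_ge0.
Qed.

End GeometricBounds.

Section Decay.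
Variable R : realType.
Local Notation C := (R[i]).
Local Notation D := (@delta C).

Lemma cmod_ge0 (z : C) : 0 <= cmod z.
Proof. by case: z => a b; rewrite /cmod /= sqrtr_ge0. Qed.

Lemma cmodD (x y : C) : cmod (x + y) <= cmod x + cmod y.
Proof. exact: le_normcD. Qed.

Lemma cmodB (x y : C) : cmod (x - y) <= cmod x + cmod y.
Proof. by have := cmodD x (- y); rewrite /cmod normcN. Qed.

Lemma cmodM (x y : C) : cmod (x * y) = cmod x * cmod y.
Proof. exact: ComplexField.Normc.normcM. Qed.

Lemma cmodV (x : C) : cmod x^-1 = (cmod x)^-1.
Proof. exact: ComplexField.Normc.normcV. Qed.

Lemma cmod0 : cmod (0 : C) = 0.
Proof. exact: ComplexField.Normc.normc0. Qed.

Lemma cmod1 : cmod (1 : C) = 1.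
Proof. exact: ComplexField.Normc.normc1. Qed.

Lemma cmodX (x : C) n : cmod (x ^+ n) = cmod x ^+ n.
Proof. by elim: n => [|n IH]; rewrite ?cmod1 // !exprS cmodM IH. Qed.

Lemma cmod_nat n : cmod (n%:R : C) = n%:R.
Proof. by rewrite /cmod -[n%:R]/(1 *+ n) normcMn ComplexField.Normc.normc1. Qed.

Lemma cmod_sum (I : Type) (r : seq I) (P : pred I) (F : I -> C) :
  cmod (\sum_(i <- r | P i) F i) <= \sum_(i <- r | P i) cmod (F i).
Proof.
elim/big_rec2: _ => [|i y1 y2 _ h]; first by rewrite cmod0.
by apply: le_trans (cmodD _ _) _; rewrite lerD2l.
Qed.

Definition harmonic (m : nat) : R := \sum_(i < m.+1) i.+1%:R^-1.

Lemma harmonic0 : harmonic 0 = 1.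
Proof. by rewrite /harmonic big_ord1 invr1. Qed.

Lemma harmonicS m : harmonic m.+1 = harmonic m + m.+2%:R^-1.
Proof. by rewrite /harmonic big_ord_recr. Qed.

Lemma le_harmonic m n : (m <= n)%N -> harmonic m <= harmonic n.
Proof.
move/subnK <-; elim: (n - m)%N => [|k IH] //.
by rewrite addSn harmonicS; apply: le_trans IH _; rewrite lerDl invr_ge0.
Qed.

Lemma harmonic_ge1 m : 1 <= harmonic m.
Proof. by rewrite -harmonic0 le_harmonic. Qed.

Lemma harmonic_ge0 m : 0 <= harmonic m.
Proof. exact: le_trans ler01 (harmonic_ge1 m). Qed.

Lemma harmonicS_le2 m : harmonic m.+1 <= 2 * harmonic m.
Proof.
rewrite harmonicS mulr2n mulrDl mul1r lerD2l; apply: le_trans (harmonic_ge1 m).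
by rewrite invf_le1 // ler1n.
Qed.

Lemma ler_harmonicX m q q' : (q <= q')%N -> harmonic m ^+ q <= harmonic m ^+ q'.
Proof. by move=> h; rewrite ler_weXn2l ?harmonic_ge1. Qed.

Lemma sum_harmonicX_div q m :
  \sum_(j < m.+1) harmonic j ^+ q / j.+1%:R <= harmonic m ^+ q.+1.
Proof.
elim: m => [|m IH]; first by rewrite big_ord1 harmonic0 !expr1n invr1 mulr1.
rewrite big_ord_recr /=; apply: le_trans (lerD IH (lexx _)) _.
rewrite harmonicS; set x := harmonic m; set d := m.+2%:R^-1.
have x0 : 0 <= x by exact: harmonic_ge0.
have d0 : 0 <= d by rewrite invr_ge0.
rewrite [leRHS]exprSr mulrDr [x ^+ q.+1]exprSr lerD2r.
by apply: ler_wpM2r => //; apply: lerXn2r; rewrite ?nnegrE ?addr_ge0 // lerDl.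
Qed.

Lemma iter_deltaD k (a b : nat -> C) :
  iter k D (fun m => a m + b m) = (fun m => iter k D a m + iter k D b m).
Proof.
elim: k => [|k IH] //=; rewrite IH; apply: boolp.funext => m.
by rewrite /delta; ring.
Qed.

Lemma iter_deltaZ k (z : C) (a : nat -> C) :
  iter k D (fun m => z * a m) = (fun m => z * iter k D a m).
Proof.
elim: k => [|k IH] //=; rewrite IH; apply: boolp.funext => m.
by rewrite /delta; ring.
Qed.

Lemma iter_delta_shift k (a : nat -> C) :
  iter k D (fun m => a m.+1) = (fun m => iter k D a m.+1).
Proof. by elim: k => [|k IH] //=; rewrite IH. Qed.

Lemma deltaM (a b : nat -> C) m :
  D (fun m => a m * b m) m = D a m * b m + a m.+1 * D b m.
Proof. by rewrite /delta; ring. Qed.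

Lemma iter_delta_geom k (s : C) :
  iter k D (fun m => s ^+ m) = (fun m => (1 - s) ^+ k * s ^+ m).
Proof.
elim: k => [|k IH] /=; first by apply: boolp.funext => m; rewrite mul1r.
by rewrite IH; apply: boolp.funext => m; rewrite /delta !exprS; ring.
Qed.

Lemma iter_delta_supp0 (a : nat -> C) k m : (forall n, (0 < n)%N -> a n = 0) ->
  (0 < m)%N -> iter k D a m = 0.
Proof.
move=> ha; elim: k m => [|k IH] m hm /=; first exact: ha.
by rewrite /delta !IH // subr0.
Qed.

Definition rising (k m : nat) : nat := \prod_(i < k.+1) (m + i).+1.

Lemma rising_neq0 k m : (rising k m)%:R != 0 :> C.
Proof. by rewrite pnatr_eq0 -lt0n prodn_gt0. Qed.

Lemma iter_delta_inv k m :
  iter k D (fun n => (n.+1%:R : C)^-1) m = k`!%:R / (rising k m)%:R.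
Proof.
elim: k m => [|k IH] m /=; first by rewrite /rising big_ord1 addn0 div1r.
have riseSr : rising k.+1 m = (rising k m * (m + k.+1).+1)%N.
  by rewrite /rising big_ord_recr.
have riseSl : rising k.+1 m = (m.+1 * rising k m.+1)%N.
  rewrite /rising big_ord_recl addn0; congr muln; apply: eq_bigr => i _.
  by rewrite /= /bump leq0n add1n addnS addSn.
have hA := rising_neq0 k m; have hQ := rising_neq0 k.+1 m.
have eB : ((rising k m.+1)%:R : C)^-1 = m.+1%:R / (rising k.+1 m)%:R.
  by rewrite riseSl natrM invfM mulrA divff ?mul1r // pnatr_eq0.
rewrite /delta !IH eB {2}riseSr natrM factS natrM riseSr natrM -addSn natrD.
by field; rewrite !nat1r -natrD pnatr_eq0 hA.
Qed.

Lemma delta_conv s (b : nat -> C) m :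
  D (conv s b) m = conv s (D b) m + (- (s * b 0%N)) * s ^+ m.
Proof.
rewrite /delta /conv [X in _ - X]big_ord_recr /= subnn.
have -> : \sum_(j < m.+1) s ^+ j * b (m.+1 - j)%N =
          \sum_(j < m.+1) s ^+ j * b (m - j).+1%N.
  by apply: eq_bigr => j _; rewrite subSn // -ltnS.
rewrite opprD addrA -sumrB.
under [X in X + _ = _]eq_bigr => j _ do rewrite -mulrBr.
by rewrite exprS; ring.
Qed.

Definition diff_bounded (k al : nat) (a : nat -> C) := exists (c : R) (q : nat),
  0 <= c /\ forall m, cmod (iter k D a m) * m.+1%:R ^+ (k + al) <= c * harmonic m ^+ q.

Definition decays (al : nat) (a : nat -> C) := forall k, diff_bounded k al a.

Lemma eq_diff_bounded k al (a b : nat -> C) :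
  a =1 b -> diff_bounded k al a -> diff_bounded k al b.
Proof. by move=> /boolp.funext ->. Qed.

Lemma diff_boundedD k al (a b : nat -> C) :
  diff_bounded k al a -> diff_bounded k al b -> diff_bounded k al (fun m => a m + b m).
Proof.
move=> [c1 [q1 [c10 h1]]] [c2 [q2 [c20 h2]]].
exists (c1 + c2), (q1 + q2)%N; split => [|m]; first exact: addr_ge0.
rewrite iter_deltaD; have P := exprn_ge0 (k + al) (ler0n R m.+1).
apply: le_trans (ler_wpM2r P (cmodD _ _)) _; rewrite !mulrDl.
apply: lerD; [apply: le_trans (h1 m) _ | apply: le_trans (h2 m) _].
  by rewrite ler_wpM2l // ler_harmonicX // leq_addr.
by rewrite ler_wpM2l // ler_harmonicX // leq_addl.
Qed.

Lemma diff_boundedZ k al z (a : nat -> C) :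
  diff_bounded k al a -> diff_bounded k al (fun m => z * a m).
Proof.
move=> [c [q [c0 h]]]; exists (cmod z * c), q; split => [|m].
  exact: mulr_ge0 (cmod_ge0 _) c0.
by rewrite iter_deltaZ cmodM -!mulrA ler_wpM2l ?cmod_ge0.
Qed.

Lemma diff_boundedS k al (a : nat -> C) :
  diff_bounded k al.+1 (D a) <-> diff_bounded k.+1 al a.
Proof.
split=> -[c [q [c0 h]]]; exists c, q; split=> // m; have := h m.
  by rewrite iterSr addSn -addnS.
by rewrite iterSr addnS -addSn.
Qed.

Lemma diff_boundedW k al be (a : nat -> C) :
  (be <= al)%N -> diff_bounded k al a -> diff_bounded k be a.
Proof.
move=> hb [c [q [c0 h]]]; exists c, q; split => // m; apply: le_trans (h m).
by rewrite ler_wpM2l ?cmod_ge0 // ler_weXn2l ?ler1n // leq_add2l.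
Qed.

Lemma diff_bounded_shift k al (a : nat -> C) :
  diff_bounded k al a -> diff_bounded k al (fun m => a m.+1).
Proof.
move=> [c [q [c0 h]]]; exists (c * 2 ^+ q), q; split => [|m].
  by rewrite mulr_ge0 ?exprn_ge0.
rewrite iter_delta_shift; apply: (@le_trans _ _ (c * harmonic m.+1 ^+ q)).
  apply: le_trans (h m.+1); rewrite ler_wpM2l ?cmod_ge0 //.
  by rewrite lerXn2r ?nnegrE // ler_nat.
rewrite -mulrA ler_wpM2l // -exprMn lerXn2r ?nnegrE ?harmonicS_le2 //.
  exact: harmonic_ge0.
by rewrite mulr_ge0 ?harmonic_ge0.
Qed.

Lemma decays_delta al (a : nat -> C) : decays al a -> decays al.+1 (D a).
Proof. by move=> h k; apply/diff_boundedS. Qed.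

Lemma decaysW al be (a : nat -> C) : (be <= al)%N -> decays al a -> decays be a.
Proof. by move=> hb h k; apply: diff_boundedW hb (h k). Qed.

Lemma decays_shift al (a : nat -> C) : decays al a -> decays al (fun m => a m.+1).
Proof. by move=> h k; apply: diff_bounded_shift. Qed.

Lemma decaysM al be (a b : nat -> C) : decays al a -> decays be b ->
  decays (al + be) (fun m => a m * b m).
Proof.
move=> + + k; elim: k al be a b => [|k IH] al be a b ha hb.
  have [c1 [q1 [c10 h1]]] := ha 0%N; have [c2 [q2 [c20 h2]]] := hb 0%N.
  exists (c1 * c2), (q1 + q2)%N; split => [|m /=]; first exact: mulr_ge0.
  rewrite cmodM !add0n !exprD mulrACA.
  rewrite [X in _ <= X](_ : _ = (c1 * harmonic m ^+ q1) * (c2 * harmonic m ^+ q2)).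
    by rewrite ler_pM ?mulr_ge0 ?cmod_ge0 ?exprn_ge0 ?h1 ?h2.
  by ring.
apply/diff_boundedS; apply: (eq_diff_bounded (fun m => esym (deltaM a b m))).
apply: diff_boundedD.
  by have := IH al.+1 be _ _ (decays_delta ha) hb; rewrite addSn.
by have := IH al be.+1 _ _ (decays_shift ha) (decays_delta hb); rewrite addnS.
Qed.

Lemma decays_geom al (s : C) : cmod s < 1 -> decays al (fun m => s ^+ m).
Proof.
move=> hs k; have [K K0 hK] := geom_poly_bounded (k + al) (cmod_ge0 s) hs.
exists (2 ^+ k * K), 0%N; split => [|m]; first by rewrite mulr_ge0 ?exprn_ge0.
rewrite iter_delta_geom expr0 mulr1 cmodM !cmodX -mulrA.
apply: ler_pM; rewrite ?mulr_ge0 ?exprn_ge0 ?cmod_ge0 ?hK //.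
apply: lerXn2r; rewrite ?nnegrE ?cmod_ge0 //; apply: le_trans (cmodB _ _) _.
by rewrite cmod1; move: hs; lra.
Qed.

Lemma decays_supp0 al (a : nat -> C) : (forall n, (0 < n)%N -> a n = 0) -> decays al a.
Proof.
move=> ha k; exists (cmod (iter k D a 0)), 0%N; split => [|[|m]].
- exact: cmod_ge0.
- by rewrite expr1n expr0 !mulr1.
- by rewrite iter_delta_supp0 // cmod0 mul0r expr0 mulr1 cmod_ge0.
Qed.

Lemma decays_inv : decays 1 (fun n => (n.+1%:R : C)^-1).
Proof.
move=> k; exists k`!%:R, 0%N; split => // m.
rewrite iter_delta_inv expr0 mulr1 cmodM cmodV !cmod_nat addn1.
rewrite -mulrA ler_piMr // mulrC ler_pdivrMr; last first.
  by rewrite ltr0n lt0n -(@pnatr_eq0 C) rising_neq0.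
rewrite mul1r -natrX ler_nat /rising.
rewrite (_ : (m.+1 ^ k.+1)%N = \prod_(i < k.+1) m.+1); last first.
  by rewrite prod_nat_const card_ord.
by apply: leq_prod => i _; rewrite ltnS leq_addr.
Qed.

Lemma decays_cumsum (b : nat -> C) : decays 1 b ->
  decays 0 (fun m => \sum_(j < m.+1) b j).
Proof.
move=> hb [|k].
  have [c [q [c0 h]]] := hb 0%N.
  exists c, q.+1; split => // m /=; rewrite expr0 mulr1.
  apply: le_trans (cmod_sum _ _ _) _.
  apply: (@le_trans _ _ (\sum_(j < m.+1) c * (harmonic j ^+ q / j.+1%:R))).
    by apply: ler_sum => j _; rewrite mulrA ler_pdivlMr // -[1%N]/(0 + 1)%N h.
  by rewrite -mulr_sumr ler_wpM2l // sum_harmonicX_div.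
apply/diff_boundedS; apply: (@eq_diff_bounded _ _ (fun m => (-1) * b m.+1)).
  by move=> m; rewrite /delta /= [X in _ = _ - X]big_ord_recr /=; ring.
exact/diff_boundedZ/diff_bounded_shift/hb.
Qed.

Lemma leq_succ_mul_subn j m : (j <= m)%N -> (m.+1 <= j.+1 * (m - j).+1)%N.
Proof. by move=> /subnKC <-; rewrite addKn; nia. Qed.

Lemma decays_conv (s : C) al (b : nat -> C) : cmod s < 1 -> decays al b ->
  decays al (conv s b).
Proof.
move=> hs + k; elim: k al b => [|k IH] al b hb.
  have [c [q [c0 h]]] := hb 0%N.
  have [K K0 hK] := geom_poly_sum_bounded al (cmod_ge0 s) hs.
  exists (c * K), q; split => [|m /=]; first exact: mulr_ge0.
  rewrite add0n; have P := exprn_ge0 al (ler0n R m.+1).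
  apply: le_trans (ler_wpM2r P (cmod_sum _ _ _)) _; rewrite mulr_suml.
  apply: (@le_trans _ _
    (\sum_(j < m.+1) c * harmonic m ^+ q * (cmod s ^+ j * j.+1%:R ^+ al))).
    apply: ler_sum => j _; rewrite cmodM cmodX.
    have hj : (j <= m)%N by rewrite -ltnS.
    pose bj := cmod (b (m - j)%N) * (m - j).+1%:R ^+ al.
    apply: (@le_trans _ _ (cmod s ^+ j * j.+1%:R ^+ al * bj)).
      rewrite /bj [leRHS](_ : _ = cmod s ^+ j * cmod (b (m - j)%N) *
                                 (j.+1%:R * (m - j).+1%:R) ^+ al); last first.
        by rewrite exprMn; ring.
      apply: ler_wpM2l; first by rewrite mulr_ge0 ?exprn_ge0 ?cmod_ge0.
      by apply: lerXn2r; rewrite ?nnegrE // -natrM ler_nat leq_succ_mul_subn.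
    rewrite mulrC ler_wpM2r ?mulr_ge0 ?exprn_ge0 ?cmod_ge0 //.
    apply: le_trans (h (m - j)%N) _; apply: ler_wpM2l => //.
    by apply: lerXn2r; rewrite ?nnegrE ?harmonic_ge0 // le_harmonic // leq_subr.
  rewrite -mulr_sumr [leRHS]mulrAC; apply: ler_wpM2l; last exact: hK.
  by rewrite mulr_ge0 ?exprn_ge0 ?harmonic_ge0.
apply/diff_boundedS; apply: (eq_diff_bounded (fun m => esym (delta_conv s b m))).
apply: diff_boundedD; first exact: IH (decays_delta hb).
exact/diff_boundedZ/decays_geom.
Qed.

Lemma decays_average (s : C) (b : nat -> C) : (cmod s < 1 \/ s = 1) ->
  decays 1 b -> decays 1 (fun n => n.+1%:R^-1 * conv s b n).
Proof.
move=> [hs|->] hb.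
  exact: decaysW (decaysM decays_inv (decays_conv hs hb)).
have -> : conv 1 b = (fun m => \sum_(j < m.+1) b j).
  apply: boolp.funext => m; rewrite /conv (reindex_inj rev_ord_inj) /=.
  by apply: eq_bigr => j _; rewrite expr1n mul1r subSS subKn // -ltnS.
exact: (decaysM decays_inv (decays_cumsum hb)).
Qed.

Lemma decays_ssh_rec p (t : nat -> C) :
  (forall k, (k < p.+1)%N -> cmod (t k) < 1 \/ t k = 1) -> decays 1 (ssh_rec p.+1 t).
Proof.
elim: p t => [|p IH] t ht; last first.
  have hb := IH _ (fun k hk => ht k.+1 hk).
  rewrite ssh_recSS; exact: decays_average (ht 0%N isT) hb.
pose b n : C := if n == 0%N then t 0%N else 0.
have -> : ssh_rec 1 t = fun n => n.+1%:R^-1 * conv (t 0%N) b n.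
  apply: boolp.funext => n /=; rewrite /conv big_ord_recr /= subnn /b /= big1.
    by rewrite add0r exprSr mulrC.
  by move=> j _; rewrite subn_eq0 leqNgt ltn_ord mulr0.
by apply: decays_average (ht 0%N isT) _; apply: decays_supp0 => -[].
Qed.

Lemma harmonic_le_ln m : harmonic m <= 1 + ln (m.+1%:R : R).
Proof.
elim: m => [|m IH]; first by rewrite harmonic0 ln1 addr0.
rewrite harmonicS; apply: le_trans (lerD IH (lexx _)) _.
rewrite -addrA lerD2l -lerBrDl.
have e : (m.+1%:R / m.+2%:R : R) = 1 + (- m.+2%:R^-1).
  by field; rewrite gt_eqF //; have := ler0n R m; lra.
have hlt : -1 < - (m.+2%:R : R)^-1 by rewrite ltrN2 invf_lt1 // ltr1n.
by have := le_ln1Dx hlt; rewrite -e ln_div ?posrE // -lerN2 opprB.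
Qed.

Lemma ln_le_powR (x d : R) : 0 < x -> 0 < d -> ln x <= x `^ d / d.
Proof.
move=> x0 d0; rewrite ler_pdivlMr // mulrC -ln_powR.
exact/ltW/ln_sublinear/powR_gt0.
Qed.

Lemma harmonic_le_powR (d : R) : 0 < d ->
  exists2 K, 0 <= K & forall m, (0 < m)%N -> harmonic m <= K * m%:R `^ d.
Proof.
move=> d0; exists (1 + 2 `^ d / d); first by rewrite addr_ge0 ?divr_ge0 ?powR_ge0 ?ltW.
move=> m hm; have m1 : (1 : R) <= m%:R by rewrite ler1n.
have pm1 : 1 <= (m%:R : R) `^ d.
  by rewrite -[leLHS](powRr0 (m%:R : R)); apply: ler_powR => //; exact: ltW.
apply: le_trans (harmonic_le_ln m) _; rewrite mulrDl mul1r lerD //.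
have : ln (m.+1%:R : R) <= (2 * m%:R) `^ d / d.
  apply: le_trans (ln_le_powR _ d0) _; first by rewrite ltr0n.
  apply: ler_wpM2r; first by rewrite invr_ge0 ltW.
  apply: ge0_ler_powR; rewrite ?nnegrE ?mulr_ge0 ?(ltW d0) // -natrM ler_nat.
  by rewrite mul2n -addnn -add1n leq_add2r.
by rewrite powRM // mulrAC.
Qed.

Lemma harmonicX_le_powR q (eps : R) : 0 < eps ->
  exists2 K, 0 <= K & forall m, (0 < m)%N -> harmonic m ^+ q <= K * m%:R `^ eps.
Proof.
move=> e0; case: q => [|q].
  exists 1 => // m hm; rewrite expr0 mul1r.
  by rewrite -[leLHS](powRr0 (m%:R : R)); apply: ler_powR; rewrite ?ler1n ?ltW.
have [K K0 hK] := harmonic_le_powR (divr_gt0 e0 (ltr0Sn R q)).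
exists (K ^+ q.+1); first exact: exprn_ge0.
move=> m hm; apply: (@le_trans _ _ ((K * m%:R `^ (eps / q.+1%:R)) ^+ q.+1)).
  by rewrite lerXn2r ?nnegrE ?harmonic_ge0 ?hK // (le_trans (harmonic_ge0 m) (hK m hm)).
by rewrite exprMn -[X in _ * X <= _]powR_mulrn ?powR_ge0 // -powRrM mulfVK.
Qed.

Lemma decays_bigO (a : nat -> C) l (eps : R) : decays 1 a -> 0 < eps ->
  exists (K : R) (M : nat), forall m : nat, (M <= m)%N ->
    cmod (iter l D a m) <= K * m%:R `^ (- (l.+1%:R - eps)).
Proof.
move=> ha e0; have [c [q [c0 h]]] := ha l.
have [K1 K10 hK] := harmonicX_le_powR q e0.
exists (c * K1), 1%N => m hm; have m0 : (0 : R) < m%:R by rewrite ltr0n.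
rewrite opprB powRD ?lt0r_neq0 ?implybT // powR_invn //.
rewrite mulrA ler_pdivlMr ?exprn_gt0 //.
apply: (@le_trans _ _ (cmod (iter l D a m) * m.+1%:R ^+ (l + 1))).
  rewrite addn1; apply: ler_wpM2l; first exact: cmod_ge0.
  by apply: lerXn2r; rewrite ?nnegrE // ler_nat.
apply: le_trans (h m) _; rewrite -mulrA; apply: ler_wpM2l => //.
exact: hK.
Qed.

End Decay.

Unset Implicit Arguments. Set Strict Implicit.

Theorem corollary3p4 (R : realType) (p l : nat) (s : 'I_p -> R[i]) :
  (0 < p)%N ->
  (forall i : 'I_p, cmod (s i) < 1 \/ s i = 1) ->
  forall eps : R, 0 < eps ->
  exists (K : R) (M : nat), forall m : nat, (M <= m)%N ->
    cmod (iter l (@delta R[i]) (ssh s) m)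
      <= K * (m%:R) `^ (- (l.+1%:R - eps)).
Proof.
case: p s => // p s _ hs eps e0.
have -> : ssh s = ssh_rec p.+1 (pad0 s) by apply: boolp.funext => m; exact: ssh_pad0.
apply: decays_bigO e0; apply: decays_ssh_rec => k hk.
by rewrite /pad0; case: insubP => [i _ _|]; [exact: hs | rewrite hk].
Qed.
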